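(* Let $(\mathcal R,\tau)$ be a t-minimal Hausdorff geometric structure and $\mathcal S$ a lore of $(\mathcal R,\tau)$. Let $X$ be a definable set, and suppose that for some $n$, $X$ admits an open cover by loric $n$-manifolds. Then $n=\dim(X)$, and hence $X$ is a loric $n$-manifold.
   Context: A structure $\mathcal R$ is geometric if $\operatorname{acl}$ satisfies exchange and $\mathcal R$ eliminates $\exists^\infty$; $\dim$ denotes acl-dimension, and $a\in X$ is generic over $A$ if $\dim(a/A)=\dim(X)$. ''Definable'' allows parameters. Given a topology $\tau$ on $R$ (extended to definable subsets of $R^n$ by product and subspace topologies), $(\mathcal R,\tau)$ is a Hausdorff geometric structure if: (1) $\tau$ is Hausdorff; (2) $\mathcal R$ is geometric and $\aleph_1$-saturated; (3) if $X\subset R^n$ is $A$-definable and $a\in\overline{\overline X-X}$ then $\dim(a/A)<\dim(X)$; (4) if $X$ is definable over a countable $A$, $a\in X$ generic over $A$, and $B\supseteq A$ countable, every neighborhood of $a$ contains a generic of $X$ over $B$; (5) if $X,Y$, $Z\subset X\times Y$ are $A$-definable of the same dimension with both projections of $Z$ finite-to-one and $(x,y)\in Z$ generic over $A$, then $Z$ restricted to some $U\times V$ ($U\ni x$, $V\ni y$ open) is the graph of a homeomorphism $U\to V$. It is t-minimal if moreover $\tau$ has a basis given by the instances of a parameter-free formula, and $R$ has no isolated points. A lore is a collection $\mathcal S$ of definable sets (''loric sets'') such that: (i) $R$ and the diagonal of $R^2$ are loric, and loric sets are closed under finite products, finite intersections, coordinate permutations; (ii) if $f:X\to Y$ is a definable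 homeomorphism with $X$ and the graph of $f$ loric, then $Y$ is loric; (iii) definable open subsets of loric sets are loric, and a definable set with an open cover by loric sets is loric; (iv) every nonempty $A$-definable $X$ has a relatively open $A$-definable loric subset $X'$ with $\dim(X-X')<\dim(X)$. A loric map is a continuous function with loric graph; a loric homeomorphism is a loric map that is a homeomorphism. For definable $X$ with $\dim(X)=n$, $x\in X$ is a loric manifold point if some definable relatively open $U$ with $x\in U\subset X$ is lorically homeomorphic to an open subset of $R^n$; $X^{lman}$ is the set of such points. A loric $n$-manifold is a definable set $Y$ with $\dim(Y)=n$ and $Y^{lman}=Y$. *)

From HB Require Import structures.
From mathcomp Require Import all_boot all_order all_algebra.
From mathcomp Require Import boolp classical_sets cardinality topology.
Set Implicit Arguments. Unset Strict Implicit. Unset Printing Implicit Defensive.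
Import Order.TTheory GRing.Theory Num.Theory.
Local Open Scope classical_set_scope.

Record language := Language { sym : Type; ar : sym -> nat }.

Section ModelTheory.
Variable L : language.
Variable R : topologicalType.
Variable I : forall s : sym L, ('I_(ar s) -> R) -> Prop.

Inductive term := tvar of nat | tpar of R.
Inductive form :=
  | fRel (s : sym L) of ('I_(ar s) -> term)
  | fEq of term & term
  | fNot of form
  | fAnd of form & form
  | fEx of nat & form.

Definition teval (e : nat -> R) (t : term) : R :=
  match t with tvar k => e k | tpar r => r end.

Definition upd (e : nat -> R) (i : nat) (r : R) : nat -> R :=
  fun k => if k == i then r else e k.

Fixpoint sat (e : nat -> R) (f : form) : Prop :=
  match f with
  | fRel s t => I (fun i => teval e (t i))
  | fEq t1 t2 => teval e t1 = teval e t2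
  | fNot g => ~ sat e g
  | fAnd g h => sat e g /\ sat e h
  | fEx i g => exists r, sat (upd e i r) g
  end.

Definition tvar_is (k : nat) (t : term) : bool :=
  if t is tvar j then j == k else false.

Fixpoint free (f : form) (k : nat) : bool :=
  match f with
  | fRel s t => [exists i, tvar_is k (t i)]
  | fEq t1 t2 => tvar_is k t1 || tvar_is k t2
  | fNot g => free g k
  | fAnd g h => free g k || free h k
  | fEx i g => (k != i) && free g k
  end.

Definition tpar_in (A : set R) (t : term) : Prop :=
  if t is tpar r then A r else True.

Fixpoint params_in (A : set R) (f : form) : Prop :=
  match f with
  | fRel s t => forall i, tpar_in A (t i)
  | fEq t1 t2 => tpar_in A t1 /\ tpar_in A t2
  | fNot g => params_in A g
  | fAnd g h => params_in A g /\ params_in A h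
  | fEx _ g => params_in A g
  end.

(* the subset of R^n defined by f (whose free variables are among x_0..x_{n-1}) *)
Definition defset (n : nat) (f : form) : set ('I_n -> R) :=
  [set x | forall e : nat -> R, (forall i : 'I_n, e i = x i) -> sat e f].

Definition definable_over (n : nat) (A : set R) (X : set ('I_n -> R)) : Prop :=
  exists f, (forall k, free f k -> (k < n)%N) /\ params_in A f /\ X = @defset n f.

Definition definable (n : nat) (X : set ('I_n -> R)) : Prop :=
  definable_over setT X.

Definition tjoin n m (x : 'I_n -> R) (y : 'I_m -> R) : 'I_(n + m) -> R :=
  fun i => match split i with inl j => x j | inr j => y j end.

Definition tup1 (r : R) : 'I_1 -> R := fun _ => r.

Definition prodset n m (X : set ('I_n -> R)) (Y : set ('I_m -> R))
  : set ('I_(n + m) -> R) :=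
  [set z | exists x y, X x /\ Y y /\ z = tjoin x y].

Definition graph n m (X : set ('I_n -> R)) (f : ('I_n -> R) -> ('I_m -> R))
  : set ('I_(n + m) -> R) :=
  [set z | exists x, X x /\ z = tjoin x (f x)].

Definition acl (A : set R) : set R :=
  [set b | exists X : set ('I_1 -> R),
      definable_over A X /\ finite_set X /\ X (tup1 b)].

Definition acl_exchange : Prop :=
  forall (A : set R) (a b : R),
    acl (A `|` [set a]) b -> ~ acl A b -> acl (A `|` [set b]) a.

Definition card_le (S : set R) (N : nat) : Prop :=
  forall f : 'I_N.+1 -> R, injective f -> ~ (forall i, S (f i)).

Definition fiber m (Z : set ('I_(1 + m) -> R)) (y : 'I_m -> R) : set R :=
  [set r | Z (tjoin (tup1 r) y)].

Definition elim_exists_infty : Prop :=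
  forall m (Z : set ('I_(1 + m) -> R)), definable Z ->
    exists N : nat, forall y : 'I_m -> R,
      finite_set (fiber Z y) -> card_le (fiber Z y) N.

Definition geometric : Prop :=
  (exists r : R, True) (* structures have nonempty universe *)
  /\ acl_exchange /\ elim_exists_infty.

Definition aindep n (A : set R) (a : 'I_n -> R) (S : {set 'I_n}) : Prop :=
  {in S &, injective a} /\
  forall i, i \in S -> ~ acl (A `|` (a @` [set j | j \in S /\ j != i])) (a i).

Definition dimt n (A : set R) (a : 'I_n -> R) : nat :=
  \max_(S : {set 'I_n} | `[< aindep A a S >]) #|S|.

(* dim(X) = max { dim(a/A) : a in X } for X definable over (countable) A;
   dim(empty) = -1 (standing for -infinity). *)
Definition dimX n (X : set ('I_n -> R)) : int :=
  if `[< X = set0 >] then Negz 0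
  else (Posz (\max_(k < n.+1 | `[< exists A, countable A /\ definable_over A X /\
                                  exists a, X a /\ dimt A a = k >]) k)%N).

Definition generic n (A : set R) (X : set ('I_n -> R)) (a : 'I_n -> R) : Prop :=
  X a /\ Posz (dimt A a) = dimX X.

Definition opent n (U : set ('I_n -> R)) : Prop :=
  forall x, U x -> exists V : 'I_n -> set R,
    (forall i, open (V i) /\ V i (x i)) /\ [set y | forall i, V i (y i)] `<=` U.

Definition relopen n (X U : set ('I_n -> R)) : Prop :=
  exists O, opent O /\ U = O `&` X.

Definition clos n (S : set ('I_n -> R)) : set ('I_n -> R) :=
  [set a | forall O, opent O -> O a -> O `&` S !=set0].

Definition cont_on n m (X : set ('I_n -> R)) (f : ('I_n -> R) -> ('I_m -> R)) :=
  forall x, X x -> forall O, opent O -> O (f x) ->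
    exists O', opent O' /\ O' x /\ f @` (O' `&` X) `<=` O.

Definition homeo n m (X : set ('I_n -> R)) (Y : set ('I_m -> R))
    (f : ('I_n -> R) -> ('I_m -> R)) : Prop :=
  cont_on X f /\ (forall x, X x -> Y (f x)) /\
  exists g : ('I_m -> R) -> ('I_n -> R),
    cont_on Y g /\ (forall y, Y y -> X (g y)) /\
    (forall x, X x -> g (f x) = x) /\ (forall y, Y y -> f (g y) = y).

Definition aleph1_saturated : Prop :=
  forall n (A : set R) (Sigma : set (set ('I_n -> R))),
    countable A -> (forall X, Sigma X -> definable_over A X) ->
    (forall k (F : 'I_k -> set ('I_n -> R)), (forall i, Sigma (F i)) ->
        exists x, forall i, F i x) ->
    exists x, forall X, Sigma X -> X x.

Definition HGS_frontier : Prop :=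
  forall n (A : set R) (X : set ('I_n -> R)) (a : 'I_n -> R),
    definable_over A X -> clos (clos X `\` X) a -> (Posz (dimt A a) < dimX X)%R.

Definition HGS_generic_dense : Prop :=
  forall n (A B : set R) (X : set ('I_n -> R)) (a : 'I_n -> R),
    countable A -> definable_over A X -> generic A X a ->
    countable B -> A `<=` B ->
    forall O, opent O -> O a -> exists b, O b /\ generic B X b.

Definition HGS_local_homeo : Prop :=
  forall n m (A : set R) (X : set ('I_n -> R)) (Y : set ('I_m -> R))
         (Z : set ('I_(n + m) -> R)) (x : 'I_n -> R) (y : 'I_m -> R),
    definable_over A X -> definable_over A Y -> definable_over A Z ->
    Z `<=` prodset X Y ->
    dimX X = dimX Y -> dimX Y = dimX Z ->
    (forall x', finite_set [set y' | Z (tjoin x' y')]) ->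
    (forall y', finite_set [set x' | Z (tjoin x' y')]) ->
    generic A Z (tjoin x y) ->
    exists U V, relopen X U /\ U x /\ relopen Y V /\ V y /\
      exists f, homeo U V f /\ Z `&` prodset U V = graph U f.

Definition hausdorff_geometric : Prop :=
  hausdorff_space R /\ (geometric /\ aleph1_saturated) /\
  HGS_frontier /\ HGS_generic_dense /\ HGS_local_homeo.

Definition instance k (phi : form) (c : 'I_k -> R) : set R :=
  [set r | @defset (1 + k) phi (tjoin (tup1 r) c)].

Definition t_minimal : Prop :=
  hausdorff_geometric /\
  (exists k (phi : form),
      (forall j, free phi j -> (j < 1 + k)%N) /\ params_in set0 phi /\
      (forall c : 'I_k -> R, open (instance phi c)) /\
      (forall (U : set R) x, open U -> U x ->
          exists c : 'I_k -> R, instance phi c x /\ instance phi c `<=` U)) /\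
  (forall x : R, ~ open [set x]).

Definition diag2 : set ('I_2 -> R) := [set z | z ord0 = z ord_max].

Definition lore (S : forall n, set (set ('I_n -> R))) : Prop :=
  (forall n X, S n X -> definable X) /\
  S 1 setT /\ S 2 diag2 /\
  (forall n m X Y, S n X -> S m Y -> S (n + m) (prodset X Y)) /\
  (forall n X Y, S n X -> S n Y -> S n (X `&` Y)) /\
  (forall n (s : 'I_n -> 'I_n) X, bijective s -> S n X ->
      S n [set x : 'I_n -> R | X (x \o s)]) /\
  (forall n m X Y (f : ('I_n -> R) -> ('I_m -> R)),
      homeo X Y f -> definable (graph X f) -> S n X -> S (n + m) (graph X f) ->
      S m Y) /\
  (forall n (X U : set ('I_n -> R)), S n X -> relopen X U -> definable U -> S n U) /\
  (forall n (X : set ('I_n -> R)), definable X ->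
      (forall x, X x -> exists U, relopen X U /\ U x /\ S n U) -> S n X) /\
  (forall n (A : set R) (X : set ('I_n -> R)), definable_over A X -> X !=set0 ->
      exists X', X' `<=` X /\ relopen X X' /\ definable_over A X' /\ S n X' /\
        (dimX (X `\` X') < dimX X)%R).

Definition loric_map (S : forall n, set (set ('I_n -> R))) n m
    (X : set ('I_n -> R)) (f : ('I_n -> R) -> ('I_m -> R)) : Prop :=
  cont_on X f /\ S (n + m) (graph X f).

Definition loric_homeo (S : forall n, set (set ('I_n -> R))) n m
    (X : set ('I_n -> R)) (Y : set ('I_m -> R)) f : Prop :=
  loric_map S X f /\ homeo X Y f.

Definition lman (S : forall n, set (set ('I_n -> R))) n (X : set ('I_n -> R))
  : set ('I_n -> R) :=
  [set x | X x /\ exists d : nat, dimX X = Posz d /\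
     exists U, definable U /\ relopen X U /\ U x /\
       exists (W : set ('I_d -> R)) (f : ('I_n -> R) -> ('I_d -> R)),
         opent W /\ loric_homeo S U W f].

Definition loric_manifold (S : forall n, set (set ('I_n -> R))) n (d : nat)
    (Y : set ('I_n -> R)) : Prop :=
  definable Y /\ dimX Y = Posz d /\ lman S Y = Y.

End ModelTheory.

(** The dimension of a definable set is attained at its generic points, and
   by condition (4) of a Hausdorff geometric structure a generic point of X
   can be moved, inside any neighbourhood, to a point generic over any larger
   countable parameter set.  If U is relatively open in X and contains a
   generic point of X, re-choosing that point generic over the parameters of
   U as well gives dim X <= dim U; the same argument with the roles swapped
   gives dim U <= dim X whenever U is a definable subset of X.  A generic point
   of X lies in some member U of the cover, so dim X = dim U = n, and the
   loric charts of the members of the cover are then loric charts of X. *)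

From Pilot Require Import Defs.
From mathcomp Require Import all_boot all_order all_algebra.
From mathcomp Require Import boolp classical_sets cardinality topology.
Import Order.TTheory GRing.Theory Num.Theory.
Local Open Scope classical_set_scope.

Set Implicit Arguments.
Unset Strict Implicit.
Unset Printing Implicit Defensive.

Lemma countableU T (A B : set T) : countable A -> countable B -> countable (A `|` B).
Proof.
move=> cA cB.
have -> : A `|` B = \bigcup_(b in [set: bool]) (if b then A else B).
  apply/seteqP; split=> x.
  - by case=> Hx; [exists true | exists false].
  - by case=> -[] _ Hx; [left | right].
by apply: bigcup_countable; [exact: countableP | case].
Qed.

Section ProductTopology.
Variable R : topologicalType.

Lemma opentT n : opent [set: 'I_n -> R].
Proof. by move=> x _; exists (fun=> setT); split=> // i; split=> //; exact: openT. Qed.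

Lemma opentI n (O1 O2 : set ('I_n -> R)) : opent O1 -> opent O2 -> opent (O1 `&` O2).
Proof.
move=> o1 o2 x [O1x O2x].
have [V1 [HV1 sV1]] := o1 x O1x; have [V2 [HV2 sV2]] := o2 x O2x.
exists (fun i => V1 i `&` V2 i); split.
  by move=> i; have [? ?] := HV1 i; have [? ?] := HV2 i; split; [exact: openI | ].
by move=> y Hy; split; [apply: sV1 | apply: sV2] => i; have [] := Hy i.
Qed.

Lemma relopen_sub n (X U : set ('I_n -> R)) : relopen X U -> U `<=` X.
Proof. by move=> [O [_ ->]] x []. Qed.

Lemma relopen_trans n (X U V : set ('I_n -> R)) :
  relopen X U -> relopen U V -> relopen X V.
Proof.
by move=> [O1 [o1 ->]] [O2 [o2 ->]]; exists (O2 `&` O1); split; [exact: opentI | rewrite setIA].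
Qed.

End ProductTopology.

Section FormulaParams.
Variables (L : language) (R : topologicalType).
Variable I : forall s : sym L, ('I_(ar s) -> R) -> Prop.

Definition term_params (t : term R) : set R :=
  if t is tpar r then [set r] else set0.

Fixpoint form_params (f : Defs.form L R) : set R :=
  match f with
  | fRel s t => \bigcup_(i in [set: 'I_(ar s)]) term_params (t i)
  | fEq t1 t2 => term_params t1 `|` term_params t2
  | fNot g => form_params g
  | fAnd g h => form_params g `|` form_params h
  | fEx _ g => form_params g
  end.

Lemma countable_term_params t : countable (term_params t).
Proof. by case: t => [k | r]; [exact: countable0 | exact: countable1]. Qed.

Lemma countable_form_params f : countable (form_params f).
Proof.
elim: f => [s t | t1 t2 | g IH | g IHg h IHh | k g IH] //=.
- apply: bigcup_countable; first exact: countableP.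
  by move=> i _; exact: countable_term_params.
- by apply: countableU; exact: countable_term_params.
- exact: countableU.
Qed.

Lemma tpar_in_sub (A B : set R) t : A `<=` B -> tpar_in A t -> tpar_in B t.
Proof. by case: t => //= r /[apply]. Qed.

Lemma tpar_in_term_params t : tpar_in (term_params t) t.
Proof. by case: t. Qed.

Lemma params_in_sub (A B : set R) (f : Defs.form L R) :
  A `<=` B -> params_in A f -> params_in B f.
Proof.
move=> AB; elim: f => [s t | t1 t2 | g IH | g IHg h IHh | k g IH] //=.
- by move=> Ht i; exact: tpar_in_sub (Ht i).
- by case=> H1 H2; split; exact: tpar_in_sub AB _.
- by case=> Hg Hh; split; [exact: IHg | exact: IHh].
Qed.

Lemma params_in_form_params f : params_in (form_params f) f.
Proof.
elim: f => [s t | t1 t2 | g IH | g IHg h IHh | k g IH] //=.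
- move=> i; apply: (tpar_in_sub _ (tpar_in_term_params (t i))).
  by move=> r Hr; exists i.
- by split; apply: tpar_in_sub (tpar_in_term_params _) => r Hr; [left | right].
- by split; [apply: params_in_sub IHg | apply: params_in_sub IHh] => r Hr;
    [left | right].
Qed.

Lemma definable_over_sub n (A B : set R) (X : set ('I_n -> R)) :
  A `<=` B -> definable_over I A X -> definable_over I B X.
Proof.
by move=> AB [f [Hf [Hp ->]]]; exists f; split=> //; split=> //; exact: params_in_sub Hp.
Qed.

Lemma definable_over_countable n (X : set ('I_n -> R)) :
  definable I X -> exists A, countable A /\ definable_over I A X.
Proof.
move=> [f [Hf [_ ->]]]; exists (form_params f); split; first exact: countable_form_params.
by exists f; split=> //; split=> //; exact: params_in_form_params.
Qed.

End FormulaParams.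

Section Dimension.
Variables (L : language) (R : topologicalType).
Variable I : forall s : sym L, ('I_(ar s) -> R) -> Prop.

Lemma dimt_ltn n (A : set R) (a : 'I_n -> R) : (dimt I A a < n.+1)%N.
Proof.
rewrite ltnS; apply/bigmax_leqP => S _.
by rewrite -[leqRHS](card_ord n); exact: max_card.
Qed.

Definition dim_attained n (X : set ('I_n -> R)) (k : 'I_n.+1) : bool :=
  `[< exists A, countable A /\ definable_over I A X /\
        exists a, X a /\ dimt I A a = k >].

Lemma dimX_nonempty n (X : set ('I_n -> R)) : X !=set0 ->
  dimX I X = Posz (\max_(k < n.+1 | dim_attained X k) k)%N.
Proof. by move=> [x Xx]; rewrite /dimX; case: asboolP => // X0; rewrite X0 in Xx. Qed.

Lemma dimt_le_dimX n (A : set R) (X : set ('I_n -> R)) a :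
  countable A -> definable_over I A X -> X a -> (Posz (dimt I A a) <= dimX I X)%R.
Proof.
move=> cA dA Xa; rewrite (dimX_nonempty (ex_intro _ a Xa)) lez_nat.
apply: (@leq_bigmax_cond _ _ (fun k : 'I_n.+1 => nat_of_ord k) (Ordinal (dimt_ltn A a))).
by apply/asboolP; exists A; split=> //; split=> //; exists a.
Qed.

Lemma exists_generic n (X : set ('I_n -> R)) : definable I X -> X !=set0 ->
  exists A a, countable A /\ definable_over I A X /\ generic I A X a.
Proof.
move=> dX [x Xx]; have [A0 [cA0 dA0]] := definable_over_countable dX.
have P0 : dim_attained X (Ordinal (dimt_ltn A0 x)).
  by apply/asboolP; exists A0; split=> //; split=> //; exists x.
rewrite /generic (dimX_nonempty (ex_intro _ x Xx)).
rewrite (bigop.bigmax_eq_arg _ P0).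
case: arg_maxnP => // k /asboolP [A [cA [dA [a [Xa <-]]]]] _.
by exists A, a.
Qed.

Hypothesis generic_dense : HGS_generic_dense I.

Lemma generic_near n (A B : set R) (X : set ('I_n -> R)) a O :
  countable A -> countable B -> definable_over I A X -> generic I A X a ->
  opent O -> O a -> exists b, O b /\ generic I (A `|` B) X b.
Proof.
move=> cA cB dA gA oO Oa.
by apply: (generic_dense cA dA gA (countableU cA cB)) => // r Ar; left.
Qed.

Lemma dimX_le_of_generic n (X U : set ('I_n -> R)) (A : set R) a O :
  countable A -> definable_over I A X -> generic I A X a ->
  definable I U -> opent O -> O a -> O `&` X `<=` U -> (dimX I X <= dimX I U)%R.
Proof.
move=> cA dA gA dU oO Oa OXU.
have [B [cB dB]] := definable_over_countable dU.
have [b [Ob [Xb <-]]] := generic_near cA cB dA gA oO Oa.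
apply: dimt_le_dimX; first exact: countableU.
- by apply: definable_over_sub dB => r Br; right.
- exact: OXU.
Qed.

Lemma dimX_subset n (U X : set ('I_n -> R)) :
  definable I U -> definable I X -> U `<=` X -> (dimX I U <= dimX I X)%R.
Proof.
move=> dU dX UX; have [-> | /set0P neU] := eqVneq U set0.
  rewrite {1}/dimX; case: asboolP => [_ | /(_ erefl) //].
  by rewrite /dimX; case: asboolP.
have [A [a [cA [dA gA]]]] := exists_generic dU neU.
apply: (dimX_le_of_generic cA dA gA dX (@opentT R n)) => // x [_]; exact: UX.
Qed.

Lemma dimX_relopen_generic n (X U : set ('I_n -> R)) (A : set R) a :
  countable A -> definable_over I A X -> generic I A X a ->
  definable I X -> definable I U -> relopen X U -> U a -> dimX I U = dimX I X.
Proof.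
move=> cA dA gA dX dU rU Ua; have [O [oO EU]] := rU.
apply/eqP; rewrite eq_le (dimX_subset dU dX (relopen_sub rU)) /=.
have Oa : O a by move: Ua; rewrite EU => -[].
by apply: (dimX_le_of_generic cA dA gA dU oO Oa); rewrite EU.
Qed.

End Dimension.

Section LoricManifolds.
Variables (L : language) (R : topologicalType).
Variable I : forall s : sym L, ('I_(ar s) -> R) -> Prop.
Variable S : forall n, set (set ('I_n -> R)).

Lemma lman_relopen n (X U : set ('I_n -> R)) :
  relopen X U -> dimX I U = dimX I X -> lman I S U `<=` lman I S X.
Proof.
move=> rU dimUX x [Ux [d [dimU [V [dV [rV [Vx chart]]]]]]].
split; first exact: relopen_sub rU _ Ux.
exists d; split; first by rewrite -dimUX.
by exists V; split=> //; split; first exact: relopen_trans rU rV.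
Qed.

End LoricManifolds.

Theorem lemma2p18 (L : language) (R : topologicalType)
    (I : forall s : sym L, ('I_(ar s) -> R) -> Prop)
    (S : forall n, set (set ('I_n -> R))) :
  t_minimal I -> lore I S ->
  forall (m : nat) (X : set ('I_m -> R)) (d : nat),
    definable I X -> X !=set0 ->
    (forall x, X x -> exists U, relopen X U /\ U x /\ loric_manifold I S d U) ->
    dimX I X = Posz d /\ loric_manifold I S d X.
Proof.
move=> [[_ [_ [_ [dense _]]]] _] _ m X d dX neX cover.
have dimXd : dimX I X = Posz d.
  have [A [a [cA [dA gA]]]] := exists_generic dX neX.
  have [U [rU [Ua [dU [dimU _]]]]] := cover a gA.1.
  by rewrite -dimU (dimX_relopen_generic dense cA dA gA dX dU rU Ua).
do 3!split=> //; apply/seteqP; split=> [x [] // | x Xx].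
have [U [rU [Ux [_ [dimU lU]]]]] := cover x Xx.
have dimUX : dimX I U = dimX I X by rewrite dimU dimXd.
by apply: (lman_relopen rU dimUX); rewrite lU.
Qed.
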